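(* Let $\mathbf A$ be a t-algebra of type $\tau$ and trace $\mathsf a$, $X$ a set, and $u_1,u_2\in T_\tau(X)$. Then $\alpha(u_1)=\alpha(u_2)$ for every weak homomorphism $\alpha:\mathcal T_\tau(X)\to\mathbf A^{(\mathsf a)}$ if and only if $\beta(u_1)=\beta(u_2)$ for every strong homomorphism $\beta:\mathcal T_\tau(X)\to\mathbf A^{(\mathsf a)}$.
   Context: $\mathbb N=\{1,2,\dots\}$. A thread on a set $A$ is $s=(s_i)_{i\in\mathbb N}\in A^{\mathbb N}$; for a thread $r$ and $a_1,\dots,a_n\in A$, $r[a_1,\dots,a_n]$ is the thread with $i$-th entry $a_i$ for $i\le n$ and $r_i$ for $i>n$. Write $r\equiv_{\mathbb N}s$ iff $\{i:r_i\ne s_i\}$ is finite; $[s]_{\mathbb N}$ is the class of $s$. A trace on $A$ is a nonempty $\mathsf a\subseteq A^{\mathbb N}$ that is a union of $\equiv_{\mathbb N}$-classes. For a set $\tau$ of operation symbols, a t-algebra of type $\tau$ and trace $\mathsf a$ is $\mathbf A=(A,\mathsf a,\sigma^{\mathbf A})_{\sigma\in\tau}$ with $\mathsf a$ a trace on $A$ and each $\sigma^{\mathbf A}:\mathsf a\to A$ an arbitrary map. Clone $\tau$-algebras: algebras $(C,q_n,\mathsf e_i,\sigma)_{n\ge0,i\ge1,\sigma\in\tau}$ ($\mathsf e_i,\sigma$ constants, $q_n$ of arity $n+1$) satisfying (C1) $q_n(\mathsf e_i,x_1,\dots,x_n)=x_i$ ($i\le n$); (C2) $q_n(\mathsf e_j,x_1,\dots,x_n)=\mathsf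 e_j$ ($j>n$); (C3) $q_n(x,\mathsf e_1,\dots,\mathsf e_n)=x$; (C4) $q_n(x,\bar y)=q_k(x,\bar y,\mathsf e_{n+1},\dots,\mathsf e_k)$ ($k>n$); (C5) $q_n(q_n(x,\bar y),\bar z)=q_n(x,q_n(y_1,\bar z),\dots,q_n(y_n,\bar z))$. The full functional clone $\tau$-algebra $\mathbf A^{(\mathsf a)}$ has universe the set $A^{\mathsf a}$ of all maps $\mathsf a\to A$, with $\mathsf e_i(s)=s_i$, $q_n(\varphi,\psi_1,\dots,\psi_n)(s)=\varphi(s[\psi_1(s),\dots,\psi_n(s)])$ and constant $\sigma$ interpreted as $\sigma^{\mathbf A}$; it is a clone $\tau$-algebra. $T_\tau(X)$ ($\tau$-hyperterms over $X$, $X\cap\tau=\emptyset$) is the least set containing $\mathsf e_1,\mathsf e_2,\dots$ and $w(t_1,\dots,t_n,\mathsf e_{n+1},\mathsf e_{n+2},\dots)$ for $w\in\tau\cup X$, $n\ge0$, $t_i\in T_\tau(X)$; it carries the structure of the free clone $\tau$-algebra $\mathcal T_\tau(X)$ over $X$ (each $x\in X$ identified with $x(\mathsf e_1,\mathsf e_2,\dots)$), with $q_n$ acting as simultaneous substitution of the $i$-th argument for $\mathsf e_i$, $i\le n$. A homomorphism of clone $\tau$-algebras $\alpha:\mathcal T_\tau(X)\to\mathbf A^{(\mathsf a)}$ is weak if $\alpha(x)$ is a constant map for every $x\in X$, and strong if $\alpha(x)$ is semiconstant for every $x\in X$, where $\varphi:\mathsf a\to A$ is semiconstant if $r\equiv_{\mathbb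 N}s$ implies $\varphi(r)=\varphi(s)$ for $r,s\in\mathsf a$. *)

From mathcomp Require Import all_boot.
Set Implicit Arguments. Unset Strict Implicit. Unset Printing Implicit Defensive.

(* Convention: threads are 0-indexed: for s : nat -> A, (s i) is the paper's
   (i+1)-th entry s_{i+1}.  Likewise the projection e_{i+1} is [HE i] / [Te i]. *)

Definition fin_diff (A : Type) (r s : nat -> A) : Prop :=
  exists N, forall i, N <= i -> r i = s i.

Definition is_trace (A : Type) (a : (nat -> A) -> Prop) : Prop :=
  (exists s, a s) /\ (forall r s, fin_diff r s -> a r -> a s).

Definition trc (A : Type) (a : (nat -> A) -> Prop) := {s : nat -> A | a s}.

Definition upd (A : Type) (r : nat -> A) (l : seq A) : nat -> A :=
  fun i => nth (r i) l i.

Lemma fin_diff_upd (A : Type) (r : nat -> A) l : fin_diff r (upd r l).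
Proof. exists (size l) => i Hi; rewrite /upd nth_default //. Qed.

Record tAlgebra (tau : Type) := TAlg {
  tcar : Type;
  ttrace : (nat -> tcar) -> Prop;
  ttrace_ok : is_trace ttrace;
  top : tau -> trc ttrace -> tcar }.
Arguments ttrace {tau} t _.
Arguments ttrace_ok {tau} t.
Arguments top {tau} t _ _.

Lemma upd_in tau (A : tAlgebra tau) (s : trc (ttrace A)) l :
  ttrace A (upd (proj1_sig s) l).
Proof.
case: (ttrace_ok A) => _ H; apply: (H (proj1_sig s)); first exact: fin_diff_upd.
exact: (proj2_sig s).
Qed.

Definition FCar tau (A : tAlgebra tau) := trc (ttrace A) -> tcar A.

Definition Fe tau (A : tAlgebra tau) (i : nat) : FCar A :=
  fun s => proj1_sig s i.

(* q_n(phi, psi_1, ..., psi_n) with n = size psis *)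
Definition Fq tau (A : tAlgebra tau) (phi : FCar A) (psis : seq (FCar A)) : FCar A :=
  fun s => phi (exist _ (upd (proj1_sig s) (map (fun psi => psi s) psis))
                        (upd_in s _)).

Definition semiconstant tau (A : tAlgebra tau) (phi : FCar A) : Prop :=
  forall r s : trc (ttrace A), fin_diff (proj1_sig r) (proj1_sig s) -> phi r = phi s.

(* raw hyperterms: [HApp w [t_1;...;t_n]] is w(t_1,...,t_n,e_{n+1},e_{n+2},...) *)
Inductive hterm (tau X : Type) :=
| HE : nat -> hterm tau X
| HApp : tau + X -> seq (hterm tau X) -> hterm tau X.
Arguments HE {tau X}.

Definition is_E tau X (k : nat) (t : hterm tau X) : bool :=
  if t is HE j then j == k else false.

(* remove trailing arguments t_k = e_k (working on the reversed list) *)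
Fixpoint trimr tau X (r : seq (hterm tau X)) : seq (hterm tau X) :=
  if r is x :: r' then (if is_E (size r') x then trimr r' else r) else [::].

Definition strip tau X (l : seq (hterm tau X)) := rev (trimr (rev l)).

(* normal form: every hyperterm has a unique normal representative *)
Fixpoint norm tau X (t : hterm tau X) : hterm tau X :=
  match t with
  | HE i => HE i
  | HApp w l => HApp w (strip (map (@norm tau X) l))
  end.

Fixpoint subst tau X (l : seq (hterm tau X)) (t : hterm tau X) : hterm tau X :=
  match t with
  | HE i => nth (HE i) l i
  | HApp w args => HApp w (map (subst l) args ++ drop (size args) l)
  end.

(** The universe T_tau(X) of the free clone tau-algebra: normal hyperterms. *)
Definition hyperterm tau X := {t : hterm tau X | exists u, t = norm u}.

Definition Te tau X (i : nat) : hyperterm tau X :=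
  exist _ (HE i) (ex_intro _ (HE i) erefl).

Definition Tsym tau X (s : tau) : hyperterm tau X :=
  exist _ (HApp (inl s) [::]) (ex_intro _ (HApp (inl s) [::]) erefl).

(* x in X identified with x(e_1,e_2,...) *)
Definition Tvar tau X (x : X) : hyperterm tau X :=
  exist _ (HApp (inr x) [::]) (ex_intro _ (HApp (inr x) [::]) erefl).

Definition Tq tau X (t : hyperterm tau X) (l : seq (hyperterm tau X)) : hyperterm tau X :=
  let u := subst (map (@proj1_sig _ _) l) (proj1_sig t) in
  exist _ (norm u) (ex_intro _ u erefl).

Definition clone_hom tau X (A : tAlgebra tau) (alpha : hyperterm tau X -> FCar A) : Prop :=
  [/\ forall i, alpha (@Te tau X i) = @Fe tau A i,
      forall s, alpha (@Tsym tau X s) = top A s &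
      forall t l, alpha (Tq t l) = Fq (alpha t) (map alpha l)].

Definition weak_hom tau X (A : tAlgebra tau) (alpha : hyperterm tau X -> FCar A) : Prop :=
  clone_hom alpha /\ forall x, exists c : tcar A, alpha (@Tvar tau X x) = (fun _ => c).

Definition strong_hom tau X (A : tAlgebra tau) (alpha : hyperterm tau X -> FCar A) : Prop :=
  clone_hom alpha /\ forall x, semiconstant (alpha (@Tvar tau X x)).

From mathcomp Require Import all_boot.
From Stdlib Require Import FunctionalExtensionality ProofIrrelevance.
Set Implicit Arguments. Unset Strict Implicit. Unset Printing Implicit Defensive.

(* A clone homomorphism beta : T_tau(X) -> A^(a) is the evaluation of hyperterms
   under its values on the atoms (symbols of tau and variables of X), and this
   evaluation is local on each class [r0]_N: its value at r =_N r0 only involves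
   the atoms at threads =_N r0.  So if beta is strong, replacing each beta x by
   the constant map with value beta x r0 gives a weak homomorphism that agrees
   with beta at r0.  Conversely, constant maps are semiconstant. *)

Lemma sig_eq (T : Type) (P : T -> Prop) (a b : {x | P x}) :
  proj1_sig a = proj1_sig b -> a = b.
Proof.
by case: a b => a pa [b pb] /= eab; subst b; rewrite (proof_irrelevance _ pa pb).
Qed.

Lemma fin_diff_refl (A : Type) (r : nat -> A) : fin_diff r r.
Proof. by exists 0. Qed.

Lemma fin_diff_sym (A : Type) (r s : nat -> A) : fin_diff r s -> fin_diff s r.
Proof. by case=> N rs; exists N => i Ni; rewrite rs. Qed.

Lemma fin_diff_trans (A : Type) (r s t : nat -> A) :
  fin_diff r s -> fin_diff s t -> fin_diff r t.
Proof.
case=> N rs [M st]; exists (maxn N M) => i; rewrite geq_max => /andP[Ni Mi].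
by rewrite rs ?st.
Qed.

Lemma upd_nil (A : Type) (r : nat -> A) : upd r [::] = r.
Proof. by apply: functional_extensionality => i; rewrite /upd nth_nil. Qed.

Lemma upd_upd (A : Type) (r : nat -> A) L M :
  upd (upd r L) M = upd r (M ++ drop (size M) L).
Proof.
apply: functional_extensionality => i; rewrite /upd nth_cat.
case: ltnP => Mi; first exact: set_nth_default.
by rewrite (nth_default _ Mi) nth_drop subnKC.
Qed.

Lemma upd_rcons_self (A : Type) (r : nat -> A) M :
  upd r (rcons M (r (size M))) = upd r M.
Proof.
apply: functional_extensionality => i; rewrite /upd nth_rcons.
case: ltngtP => // [Mi | ->]; first by rewrite nth_default // ltnW.
by rewrite nth_default.
Qed.

Definition all_prop (T : Type) (P : T -> Prop) (l : seq T) : Prop :=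
  foldr (fun t acc => P t /\ acc) True l.

Lemma all_prop_eq_map (T U : Type) (P : T -> Prop) (f g : T -> U) l :
  (forall t, P t -> f t = g t) -> all_prop P l -> map f l = map g l.
Proof. by move=> fg; elim: l => //= x l IH [/fg -> /IH ->]. Qed.

Fixpoint hterm_ind (tau X : Type) (P : hterm tau X -> Prop)
  (PE : forall i, P (HE i))
  (PApp : forall w l, all_prop P l -> P (HApp w l)) (t : hterm tau X) : P t :=
  match t with
  | HE i => PE i
  | HApp w l => PApp w l ((fix F (l : seq (hterm tau X)) : all_prop P l :=
        match l with
        | [::] => I
        | x :: l' => conj (hterm_ind PE PApp x) (F l')
        end) l)
  end.

Section Normalisation.
Variables tau X : Type.
Implicit Types (s : seq (hterm tau X)) (t : hterm tau X).

Lemma is_E_eq k t : is_E k t -> t = HE k.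
Proof. by case: t => //= j /eqP ->. Qed.

Lemma trimr_idem s : trimr (trimr s) = trimr s.
Proof. by elim: s => //= x s IH; case ex: (is_E _ x) => //=; rewrite ex. Qed.

Lemma map_norm_trimr s : map (@norm _ _) (trimr s) = trimr (map (@norm _ _) s).
Proof.
elim: s => //= x s IH; rewrite size_map.
have -> : is_E (size s) (norm x) = is_E (size s) x by case: x.
by case: (is_E _ x).
Qed.

Lemma norm_idem t : norm (norm t) = norm t.
Proof.
elim/hterm_ind: t => [i | w l IH] //=; congr HApp.
rewrite /strip -map_rev revK map_norm_trimr map_rev -map_comp.
by rewrite (all_prop_eq_map (g := @norm _ _) _ IH) // trimr_idem.
Qed.

(* Trailing arguments t_k = e_k are invisible to any assignment that sends e_k to r_k. *)
Lemma upd_trimr (A : Type) (r : nat -> A) (f : hterm tau X -> A) :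
  (forall k, f (HE k) = r k) ->
  forall s, upd r (map f (rev (trimr s))) = upd r (map f (rev s)).
Proof.
move=> fE; elim => [|x s IH] //=; case ex: (is_E (size s) x) => //.
rewrite IH rev_cons map_rcons (is_E_eq ex) fE.
by rewrite -(size_rev s) -(size_map f (rev s)) upd_rcons_self.
Qed.

End Normalisation.

Section Evaluation.
Variables (tau X : Type) (A : tAlgebra tau).
Implicit Types (g : tau + X -> FCar A) (t : hterm tau X).

Fixpoint heval g t : FCar A :=
  match t with
  | HE i => @Fe tau A i
  | HApp w l => Fq (g w) (map (heval g) l)
  end.

Lemma heval_norm g t : heval g (norm t) = heval g t.
Proof.
elim/hterm_ind: t => [i | w l IH] //=.
apply: functional_extensionality => r; congr (g w _); apply: sig_eq => /=.
rewrite /strip -!map_comp (upd_trimr (f := (fun psi => psi r) \o heval g)) // revK.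
by rewrite -map_comp; congr upd; apply: (all_prop_eq_map _ IH) => t /= ->.
Qed.

Lemma heval_subst g L t r :
  heval g (subst L t) r =
  heval g t (exist _ (upd (proj1_sig r) (map (fun u => heval g u r) L)) (upd_in r _)).
Proof.
elim/hterm_ind: t r => [i | w l IH] r /=.
  rewrite /Fe /upd /=; case: (ltnP i (size L)) => iL; first by rewrite (nth_map (HE i)).
  by rewrite !nth_default ?size_map.
congr (g w _); apply: sig_eq => /=.
rewrite upd_upd -!map_comp map_cat -!map_comp size_map map_drop.
congr (upd _ (_ ++ _)).
by apply: (all_prop_eq_map _ IH) => t /= ->.
Qed.

Lemma heval_fin_diff g g' (r0 : trc (ttrace A)) :
  (forall w r, fin_diff (proj1_sig r0) (proj1_sig r) -> g w r = g' w r) ->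
  forall t r, fin_diff (proj1_sig r0) (proj1_sig r) -> heval g t r = heval g' t r.
Proof.
move=> gg'; elim/hterm_ind => [i | w l IH] r r0r //=; rewrite /Fq.
have -> : map (fun psi => psi r) (map (heval g) l) =
          map (fun psi => psi r) (map (heval g') l).
  by rewrite -!map_comp; apply: (all_prop_eq_map _ IH) => t /= ->.
by apply: gg'; exact: fin_diff_trans r0r (fin_diff_upd _ _).
Qed.

Definition heval_hom g (v : hyperterm tau X) : FCar A := heval g (proj1_sig v).

Definition atom (w : tau + X) : hyperterm tau X :=
  match w with inl s => Tsym X s | inr x => Tvar tau x end.

Lemma clone_hom_heval (beta : hyperterm tau X -> FCar A) :
  clone_hom beta -> beta =1 heval_hom (fun w => beta (atom w)).
Proof.
case=> betaE _ betaQ [v [u e]]; subst v; rewrite /heval_hom /= heval_norm.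
pose nf (v : hterm tau X) : hyperterm tau X := exist _ (norm v) (ex_intro _ v erefl).
suff: beta (nf u) = heval (fun w => beta (atom w)) u.
  by apply: etrans; congr beta; apply: sig_eq.
elim/hterm_ind: u => [i | w l IH]; first exact: betaE.
have -> : nf (HApp w l) = Tq (atom w) (map nf l).
  apply: sig_eq; case: w => [s | x]; rewrite /= drop0 -!map_comp;
  by congr (HApp _ (strip _)); apply: eq_map => v /=; rewrite norm_idem.
by rewrite betaQ -map_comp; congr Fq; apply: (all_prop_eq_map _ IH).
Qed.

Lemma clone_hom_heval_hom g :
  (forall s, g (inl s) = top A s) -> clone_hom (heval_hom g).
Proof.
rewrite /heval_hom => gs; split=> [i | s | v l] //=.
  apply: functional_extensionality => r; rewrite /Fq gs; congr (top A s).
  by apply: sig_eq; rewrite /= upd_nil.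
apply: functional_extensionality => r; rewrite heval_norm heval_subst /Fq -!map_comp.
by congr (heval g _ _); apply: sig_eq.
Qed.

Lemma weak_hom_heval_hom g :
  (forall s, g (inl s) = top A s) -> (forall x, exists c, g (inr x) = fun _ => c) ->
  weak_hom (heval_hom g).
Proof.
move=> gs gx; split; first exact: clone_hom_heval_hom.
move=> x; have [c gxc] := gx x; exists c.
by apply: functional_extensionality => r; rewrite /heval_hom /= /Fq gxc.
Qed.

Lemma weak_hom_strong (alpha : hyperterm tau X -> FCar A) :
  weak_hom alpha -> strong_hom alpha.
Proof. by case=> alpha_hom alpha_const; split=> // x r s _; case: (alpha_const x) => c ->. Qed.

End Evaluation.

Theorem mainTheorem2 (tau X : Type) (A : tAlgebra tau) (u1 u2 : hyperterm tau X) :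
  (forall alpha : hyperterm tau X -> FCar A, weak_hom alpha -> alpha u1 = alpha u2) <->
  (forall beta : hyperterm tau X -> FCar A, strong_hom beta -> beta u1 = beta u2).
Proof.
split=> [weak_eq beta [beta_hom beta_semiconst] | strong_eq alpha /weak_hom_strong];
  last exact: strong_eq.
apply: functional_extensionality => r0.
pose g (w : tau + X) : FCar A :=
  match w with inl s => top A s | inr x => fun _ => beta (Tvar tau x) r0 end.
have beta_g w r : fin_diff (proj1_sig r0) (proj1_sig r) -> beta (atom w) r = g w r.
  case: w => [s | x] r0r /=; first by case: beta_hom => _ -> _.
  exact/beta_semiconst/fin_diff_sym.
have alpha_weak : weak_hom (heval_hom g).
  by apply: weak_hom_heval_hom => // x; exists (beta (Tvar tau x) r0).
rewrite !(clone_hom_heval beta_hom) /heval_hom !(heval_fin_diff beta_g _ (fin_diff_refl _)).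
exact: (congr1 (fun f => f r0) (weak_eq _ alpha_weak)).
Qed.
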